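(* Let $i,j,m$ be non-negative integers. Then \[2^{2m}\,C(i,j)=\sum_{b=0}^m\binom{m}{b}\,C(i+b,\,m+j-b).\]
   Context: $C(p,q)=\frac{(2p)!(2q)!}{p!(p+q)!q!}$ for non-negative integers $p,q$. *)

From mathcomp Require Import all_boot all_order all_algebra.
Set Implicit Arguments. Unset Strict Implicit. Unset Printing Implicit Defensive.
Import GRing.Theory Num.Theory.
Local Open Scope ring_scope.

(* Super Catalan numbers C(p,q) = (2p)!(2q)! / (p! (p+q)! q!), computed
   exactly in the rationals (no truncating division). *)
Definition superC (p q : nat) : rat :=
  ((2 * p)`!%:R * (2 * q)`!%:R) / (p`!%:R * (p + q)`!%:R * q`!%:R).

From mathcomp Require Import all_boot all_order all_algebra.
From mathcomp Require Import zify ring.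
Import GRing.Theory Num.Theory.
Local Open Scope ring_scope.

(* The super Catalan numbers satisfy 4 C(p,q) = C(p+1,q) + C(p,q+1).  Any
   array obeying c f(p,q) = f(p+1,q) + f(p,q+1) satisfies
   c^m f(p,q) = sum_b binom(m,b) f(p+b, q+m-b): c^m is the m-th power of the
   sum of the two commuting shifts, expanded by the binomial theorem. *)

Section ShiftRecurrence.

Context {R : pzSemiRingType} {c : R} {f : nat -> nat -> R}.
Hypothesis f_rec : forall p q, c * f p q = f p.+1 q + f p q.+1.

Lemma shift_recurrence_expand m p q :
  c ^+ m * f p q = \sum_(b < m.+1) 'C(m, b)%:R * f (p + b) (q + (m - b)).
Proof.
elim: m p q => [|m IHm] p q.
  by rewrite big_ord1 expr0 !mul1r !addn0.
rewrite exprSr -mulrA f_rec mulrDr !IHm [RHS]big_ord_recl.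
under [in RHS]eq_bigr => b _ do rewrite binS natrD mulrDl.
rewrite big_split /= addrA [RHS]addrC; congr (_ + _).
  by apply: eq_bigr => b _; rewrite /bump /= add1n subSS addSnnS.
transitivity (\sum_(b < m.+2) 'C(m, b)%:R * f (p + b) (q + (m.+1 - b))).
  rewrite [RHS]big_ord_recr /= bin_small // mul0r addr0.
  by apply: eq_bigr => b _; rewrite (@subSn b m (ltn_ord b)) addnS addSn.
by rewrite big_ord_recl !bin0.
Qed.

End ShiftRecurrence.

Lemma natr_fact_neq0 n : (n`!%:R : rat) != 0.
Proof. by rewrite pnatr_eq0 -lt0n fact_gt0. Qed.

Lemma superC_sym p q : superC p q = superC q p.
Proof. by rewrite /superC addnC [(2 * p)`!%:R * _]mulrC; congr (_ / _); ring. Qed.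

Lemma superC_Sl p q :
  superC p.+1 q = superC p q * (2 * (2 * p).+1)%:R / (p + q).+1%:R.
Proof.
rewrite /superC addSn mul2n doubleS -mul2n !factS.
have -> : ((2 * p).+2 = 2 * p.+1)%N by lia.
by rewrite !natrM; field; rewrite -natrD !nat1r !natr_fact_neq0 !pnatr_eq0.
Qed.

Lemma superC_Sr p q :
  superC p q.+1 = superC p q * (2 * (2 * q).+1)%:R / (p + q).+1%:R.
Proof. by rewrite superC_sym superC_Sl superC_sym addnC. Qed.

Lemma superC_rec p q : 4%:R * superC p q = superC p.+1 q + superC p q.+1.
Proof.
rewrite superC_Sl superC_Sr -mulrDl -mulrDr -natrD.
have -> : (2 * (2 * p).+1 + 2 * (2 * q).+1 = 4 * (p + q).+1)%N by lia.
by rewrite natrM mulrA mulfK ?pnatr_eq0 // mulrC.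
Qed.

Theorem lemma5p5 (i j m : nat) :
  (2 ^ (2 * m))%:R * superC i j =
  \sum_(0 <= b < m.+1) 'C(m, b)%:R * superC (i + b) (m + j - b).
Proof.
rewrite expnM natrX (shift_recurrence_expand superC_rec) big_mkord.
by apply: eq_bigr => b _; rewrite (addnC m j) addnBA // -ltnS.
Qed.
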